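(* Let $t\ge 2$ be a real number. Every poset $\mathbf{P}$ that has an interval representation in which every interval has length in $[1,t]$ satisfies $\dim(\mathbf{P})\le 2\lceil\lg\lg t\rceil+4$; that is, $f(C[1,t])\le 2\lceil\lg\lg t\rceil+4$.
   Context: $\lg$ denotes the logarithm of base $2$. An interval representation of a poset $(X,P)$ assigns to each $x\in X$ a closed real interval $[l_x,r_x]$ such that $x<y$ in $P$ iff $r_x<l_y$; the length is $r_x-l_x$. $C[\alpha,\beta]$ is the class of posets having an interval representation with all lengths in $[\alpha,\beta]$, and $f(C[\alpha,\beta])$ is the least upper bound of the dimensions of posets in $C[\alpha,\beta]$. The dimension of a poset is the minimum number of linear extensions whose intersection is the partial order. *)

From Stdlib Require Import Reals ZArith.
Open Scope R_scope.

Definition lg (x : R) : R := ln x / ln 2.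

(* ceiling: the least integer >= x.  (up y is the unique integer with y < up y <= y+1) *)
Definition ceilR (x : R) : Z := (1 - up (- x))%Z.

Definition interval_rep_in {X : Type} (P : X -> X -> Prop) (a b : R)
  (l r : X -> R) : Prop :=
  (forall x, l x <= r x) /\
  (forall x, a <= r x - l x <= b) /\
  (forall x y, P x y <-> r x < l y).

Definition linear_extension {X : Type} (P L : X -> X -> Prop) : Prop :=
  (forall x, ~ L x x) /\
  (forall x y z, L x y -> L y z -> L x z) /\
  (forall x y, x <> y -> L x y \/ L y x) /\
  (forall x y, P x y -> L x y).

Definition dim_le {X : Type} (P : X -> X -> Prop) (k : nat) : Prop :=
  exists L : nat -> X -> X -> Prop,
    (forall i, (i < k)%nat -> linear_extension P (L i)) /\
    (forall x y, P x y <-> (forall i, (i < k)%nat -> L i x y)).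

(* Split the intervals by dyadic scale: [x] has scale [j] when its length lies
   in [2^j, 2^(j+1)]; lengths in [1, 2^(2^K)] leave 2^K scales, written with K
   bits.  Every linear extension used orders the intervals by one chosen point
   of each interval.  Two overlapping intervals of different scales differ in
   some bit [b]; placing the point at the right end exactly for the intervals
   whose bit [b] has a given value, for each of the 2K choices, reverses them.
   Intervals of equal scale [2^j] are located by the grid cell of width [2^j]
   containing their left end; overlapping ones lie in cells at distance at most
   2, so ordering by the right end of that cell, together with the three
   extensions that move the point to the right end for one residue class of
   the cell modulo 3, reverses every such pair.  This gives 2K + 4 extensions,
   and [t <= 2^(2^K)] for [K = ceil (lg (lg t))]. *)

From Stdlib Require Import Reals ZArith Lia Lra Classical.
From mathcomp Require ssreflect ssrbool eqtype seq boolp wochoice.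
Open Scope R_scope.

Section StrictTotalOrders.
Context {X : Type}.

Definition strict_total_order (W : X -> X -> Prop) : Prop :=
  (forall x, ~ W x x) /\ (forall x y z, W x y -> W y z -> W x z) /\
  (forall x y, x <> y -> W x y \/ W y x).

Lemma strict_total_order_flip W :
  strict_total_order W -> strict_total_order (fun x y => W y x).
Proof. intros (irr & tr & tot); split; [|split]; eauto. Qed.

Definition lex_key (f : X -> R) (T : X -> X -> Prop) (a b : X) : Prop :=
  f a < f b \/ (f a = f b /\ T a b).

Lemma strict_total_order_lex_key f T :
  strict_total_order T -> strict_total_order (lex_key f T).
Proof.
  unfold lex_key; intros (irr & tr & tot); split; [|split].
  - intros x [h|[_ h]]; [lra|exact (irr x h)].
  - intros x y z [h1|[e1 h1]] [h2|[e2 h2]]; try (left; lra).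
    right; split; [lra|eauto].
  - intros x y nxy.
    destruct (total_order_T (f x) (f y)) as [[h|h]|h]; auto.
    destruct (tot x y nxy); auto.
Qed.

Lemma linear_extension_intro (P L : X -> X -> Prop) :
  strict_total_order L -> (forall x y, P x y -> L x y) -> linear_extension P L.
Proof. intros (irr & tr & tot) hPL; repeat split; assumption. Qed.

Lemma dim_le_of_reversing_extensions (P : X -> X -> Prop) (k : nat)
    (L : nat -> X -> X -> Prop) :
  (0 < k)%nat -> (forall i, (i < k)%nat -> linear_extension P (L i)) ->
  (forall x y, x <> y -> ~ P x y -> exists i, (i < k)%nat /\ L i y x) ->
  dim_le P k.
Proof.
  intros hk hL hrev; exists L; split; [exact hL|].
  intros x y; split; [intros hxy i hi; apply (hL i hi), hxy|].
  intros hall; apply NNPP; intros nxy.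
  assert (asym : forall i, (i < k)%nat -> ~ L i y x).
  { intros i hi hyx; destruct (hL i hi) as (irr & tr & _).
    exact (irr x (tr _ _ _ (hall i hi) hyx)). }
  destruct (classic (x = y)) as [<-|neq].
  - destruct (hL 0%nat hk) as (irr & _); exact (irr x (hall 0%nat hk)).
  - destruct (hrev x y neq nxy) as (i & hi & hyx); exact (asym i hi hyx).
Qed.

End StrictTotalOrders.

Section WellOrdering.
Import ssreflect ssrbool eqtype seq boolp wochoice.

Lemma strict_total_order_exists (X : Type) :
  exists W : X -> X -> Prop, strict_total_order W.
Proof.
have [R wR] := well_ordering_principle {classic X}.
have woR : wo_chain R predT by apply: withinW.
have totR := wo_chainW woR; have antiR := wo_chain_antisymmetric woR.
have trR (x y z : {classic X}) : R x y -> R y z -> R x z.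
  (* by antisymmetry, the least element of {x, y, z} may be taken to be x *)
  move=> Rxy Ryz; have [|m [[]]] := wR [mem [:: x; y; z] : seq {classic X}].
    by exists x; rewrite inE eqxx.
  rewrite !inE => /or3P[] /eqP-> lb _; first by apply: lb; rewrite !inE eqxx !orbT.
    by rewrite (antiR x y) // Rxy lb // !inE eqxx.
  by rewrite -(antiR y z) // Ryz lb // !inE eqxx !orbT.
exists (fun x y : X => R x y /\ x <> y); split; [|split].
- by move=> x [].
- move=> x y z [Rxy nxy] [Ryz nyz]; split; first exact: trR Rxy Ryz.
  by move=> exz; subst z; apply: nxy; apply: antiR => //; rewrite Rxy Ryz.
- by move=> x y nxy; case/orP: (totR x y isT isT) => h; [left|right]; split=> // e;
    apply: nxy.
Qed.

End WellOrdering.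

Section PointOrders.
Context {X : Type} (l r : X -> R).

Definition point_order (g : X -> R) (T : X -> X -> Prop) : X -> X -> Prop :=
  lex_key g (lex_key (fun x => - l x) (lex_key (fun x => - r x) T)).

Lemma point_order_linear_extension (P : X -> X -> Prop) g T :
  (forall x y, P x y -> r x < l y) -> (forall x, l x <= g x <= r x) ->
  strict_total_order T -> linear_extension P (point_order g T).
Proof.
  intros hP hg hT; apply linear_extension_intro.
  - now do 3 apply strict_total_order_lex_key.
  - intros x y hxy; left; specialize (hP x y hxy).
    pose proof (hg x); pose proof (hg y); lra.
Qed.

Lemma point_order_lt g T a b : g a < g b -> point_order g T a b.
Proof. now left. Qed.

Lemma point_order_tie g T a b :
  g a = g b -> l b < l a \/ (l b = l a /\ (r b < r a \/ (r b = r a /\ T a b))) ->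
  point_order g T a b.
Proof.
  unfold point_order, lex_key; intros e h; right; split; [exact e|].
  destruct h as [h|(e1 & [h|(e2 & h)])].
  - left; lra.
  - right; split; [lra|left; lra].
  - right; split; [lra|right; split; [lra|exact h]].
Qed.

Definition endpoint (c : X -> bool) (x : X) : R := if c x then r x else l x.

Lemma endpoint_between c x : l x <= r x -> l x <= endpoint c x <= r x.
Proof. unfold endpoint; destruct (c x); lra. Qed.

(* When [r x = l y] the points tie and the left ends decide; this is why
   [point_order] breaks ties by decreasing left end. *)
Lemma endpoint_order_reverse c T x y :
  c x = true -> c y = false -> l y <= r x -> l x < r x ->
  point_order (endpoint c) T y x.
Proof.
  unfold point_order, lex_key, endpoint; intros -> -> hyx hx; lra.
Qed.

End PointOrders.

Fixpoint dyadic_scale (n : nat) (v : R) : nat :=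
  match n with
  | O => O
  | S m => if Rle_dec (2 ^ S m) v then S m else dyadic_scale m v
  end.

Lemma dyadic_scale_le n v : (dyadic_scale n v <= n)%nat.
Proof. induction n as [|n IH]; simpl; [lia|]. destruct Rle_dec; lia. Qed.

Lemma pow2_dyadic_scale_le n v : 1 <= v -> 2 ^ dyadic_scale n v <= v.
Proof. intros hv; induction n as [|n IH]; simpl; [lra|]. destruct Rle_dec; auto. Qed.

Lemma le_pow2_dyadic_scale n v : v <= 2 ^ S n -> v <= 2 ^ S (dyadic_scale n v).
Proof.
  induction n as [|n IH]; intros hv; simpl in *; [lra|].
  destruct Rle_dec as [_|h]; [exact hv|]. apply IH; simpl; lra.
Qed.

Lemma Zfloor_div_bound v u :
  0 < u -> IZR (Zfloor (v / u)) * u <= v < (IZR (Zfloor (v / u)) + 1) * u.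
Proof.
  intros hu; pose proof (Zfloor_bound (v / u)) as hq.
  assert (hv : v = v / u * u) by (field; lra).
  set (q := v / u) in *; set (f := IZR (Zfloor q)) in *; nra.
Qed.

Lemma testbit_neq_below a b K : a <> b -> (a < 2 ^ K)%nat -> (b < 2 ^ K)%nat ->
  exists i, (i < K)%nat /\ Nat.testbit a i <> Nat.testbit b i.
Proof.
  intros nab ha hb; apply NNPP; intros hsame; apply nab.
  rewrite <- (Nat.mod_small a (2 ^ K)), <- (Nat.mod_small b (2 ^ K)) by assumption.
  apply Nat.bits_inj; intros i; destruct (Nat.lt_ge_cases i K) as [hi|hi].
  - rewrite !Nat.mod_pow2_bits_low by exact hi.
    apply NNPP; intros hne; apply hsame; eauto.
  - now rewrite !Nat.mod_pow2_bits_high.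
Qed.

Definition mod3 (z : Z) : nat := Z.to_nat (z mod 3).

Lemma mod3_lt z : (mod3 z < 3)%nat.
Proof. unfold mod3; pose proof (Z.mod_pos_bound z 3); lia. Qed.

Lemma mod3_neq z z' : (0 < z' - z < 3)%Z -> mod3 z <> mod3 z'.
Proof. unfold mod3; intros; Z.div_mod_to_equations; lia. Qed.

Lemma ceilR_Zceil x : ceilR x = Zceil x.
Proof. unfold ceilR; rewrite up_Zfloor, ZfloorN; lia. Qed.

Lemma ln_le x y : 0 < x -> x <= y -> ln x <= ln y.
Proof. intros hx [h|<-]; [left; now apply ln_increasing|lra]. Qed.

Lemma lg_le x y : 0 < x -> x <= y -> lg x <= lg y.
Proof.
  intros hx hxy; unfold lg, Rdiv; apply Rmult_le_compat_r.
  - left; apply Rinv_0_lt_compat; pose proof ln_lt_2; lra.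
  - now apply ln_le.
Qed.

Lemma le_pow2_of_lg_le x n : 0 < x -> lg x <= INR n -> x <= 2 ^ n.
Proof.
  intros hx h; apply Rnot_lt_le; intros hlt.
  apply ln_increasing in hlt; [|apply pow_lt; lra].
  rewrite ln_pow in hlt by lra.
  pose proof ln_lt_2.
  assert (e : ln x = lg x * ln 2) by (unfold lg; field; lra).
  nra.
Qed.

Lemma lg_lg_ceil_bound t : 2 <= t ->
  exists K : nat, Z.of_nat K = ceilR (lg (lg t)) /\ t <= 2 ^ (2 ^ K)%nat.
Proof.
  intros ht.
  assert (lg2 : lg 2 = 1) by (unfold lg; field; pose proof ln_lt_2; lra).
  assert (lg1 : lg 1 = 0) by (unfold lg; rewrite ln_1; lra).
  assert (h1 : 1 <= lg t) by (rewrite <- lg2; apply lg_le; lra).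
  assert (h0 : 0 <= lg (lg t)) by (rewrite <- lg1; apply lg_le; lra).
  destruct (Zfloor_ceil_bound (lg (lg t))) as [_ hc].
  assert (hK : (0 <= Zceil (lg (lg t)))%Z) by (apply le_IZR; lra).
  exists (Z.to_nat (Zceil (lg (lg t)))).
  rewrite ceilR_Zceil, Z2Nat.id by exact hK; split; [reflexivity|].
  apply le_pow2_of_lg_le; [lra|].
  rewrite pow_INR; replace (INR 2) with 2 by (simpl; lra).
  apply le_pow2_of_lg_le; [lra|].
  now rewrite INR_IZR_INZ, Z2Nat.id.
Qed.

Lemma interval_rep_in_widen {X : Type} (P : X -> X -> Prop) a b b' l r :
  b <= b' -> interval_rep_in P a b l r -> interval_rep_in P a b' l r.
Proof.
  intros hb (hlr & hlen & hP); split; [|split]; auto.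
  intros x; specialize (hlen x); lra.
Qed.

Section DyadicRealizer.
Variables (X : Type) (P : X -> X -> Prop) (l r : X -> R) (K : nat).
Variable W : X -> X -> Prop.
Hypothesis rep : interval_rep_in P 1 (2 ^ (2 ^ K)%nat) l r.
Hypothesis W_total : strict_total_order W.

Definition scale (x : X) : nat := dyadic_scale (2 ^ K - 1) (r x - l x).
Definition step (x : X) : R := 2 ^ scale x.
Definition cell (x : X) : Z := Zfloor (l x / step x).
Definition cell_end (x : X) : R := (IZR (cell x) + 1) * step x.

Lemma scale_lt x : (scale x < 2 ^ K)%nat.
Proof.
  pose proof (dyadic_scale_le (2 ^ K - 1) (r x - l x)).
  pose proof (Nat.pow_nonzero 2 K ltac:(lia)); unfold scale; lia.
Qed.

Lemma step_ge1 x : 1 <= step x.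
Proof. apply pow_R1_Rle; lra. Qed.

Lemma step_length x : step x <= r x - l x <= 2 * step x.
Proof.
  destruct rep as (_ & hlen & _); specialize (hlen x); split.
  - apply pow2_dyadic_scale_le; lra.
  - apply le_pow2_dyadic_scale.
    replace (S (2 ^ K - 1)) with (2 ^ K)%nat; [lra|].
    pose proof (Nat.pow_nonzero 2 K ltac:(lia)); lia.
Qed.

Lemma left_lt_right x : l x < r x.
Proof. pose proof (step_length x); pose proof (step_ge1 x); lra. Qed.

Lemma cell_bounds x : IZR (cell x) * step x <= l x < cell_end x.
Proof. apply Zfloor_div_bound; pose proof (step_ge1 x); lra. Qed.

Lemma cell_end_between x : l x <= cell_end x <= r x.
Proof.
  pose proof (cell_bounds x); pose proof (step_length x).
  unfold cell_end in *; lra.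
Qed.

Lemma not_prec_overlap x y : ~ P x y -> l y <= r x.
Proof.
  intros nxy; apply Rnot_lt_le; intros h; apply nxy, (proj2 (proj2 rep)), h.
Qed.

Definition residue_point (s : nat) : X -> R :=
  endpoint l r (fun x => mod3 (cell x) =? s)%nat.

Definition bit_point (b : nat) (v : bool) : X -> R :=
  endpoint l r (fun x => Bool.eqb (Nat.testbit (scale x) b) v).

(* Index [0] is the cell order, [1 + s] the residue order for [s < 3], and
   [4 + 2 b + v] the order for bit [b] of the scale being [v].  The cell order
   breaks the last ties by the reverse of [W], so that copies of one interval
   are reversed as well. *)
Definition realizer (i : nat) : X -> X -> Prop :=
  match i with
  | O => point_order l r cell_end (fun a b => W b a)
  | S i =>
      if (i <? 3)%nat then point_order l r (residue_point i) W
      else point_order l r (bit_point (Nat.div2 (i - 3)) (Nat.odd (i - 3))) W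
  end.

Lemma realizer_residue s :
  (s < 3)%nat -> realizer (S s) = point_order l r (residue_point s) W.
Proof. intros hs; simpl; now rewrite (proj2 (Nat.ltb_lt s 3) hs). Qed.

Lemma realizer_bit b v :
  realizer (4 + (2 * b + Nat.b2n v)) = point_order l r (bit_point b v) W.
Proof.
  change (4 + ?m)%nat with (S (3 + m)); unfold realizer.
  rewrite (proj2 (Nat.ltb_ge _ _)), Nat.add_comm, Nat.add_sub by lia.
  destruct v; simpl Nat.b2n.
  - now rewrite Nat.div2_odd', Nat.odd_odd.
  - now rewrite Nat.add_0_r, Nat.div2_double, Nat.odd_even.
Qed.

Lemma realizer_linear_extension i : linear_extension P (realizer i).
Proof.
  assert (hP : forall x y, P x y -> r x < l y) by apply rep.
  assert (hlr : forall x, l x <= r x) by apply rep.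
  destruct i as [|i]; simpl; [|destruct (i <? 3)%nat];
    apply point_order_linear_extension; unfold residue_point, bit_point;
    auto using strict_total_order_flip, cell_end_between, endpoint_between.
Qed.

Lemma reverse_scale_neq x y :
  scale x <> scale y -> l y <= r x ->
  exists i, (i < 2 * K + 4)%nat /\ realizer i y x.
Proof.
  intros hs hyx.
  destruct (testbit_neq_below _ _ K hs (scale_lt x) (scale_lt y)) as (b & hb & hbit).
  exists (4 + (2 * b + Nat.b2n (Nat.testbit (scale x) b)))%nat; split.
  { destruct (Nat.testbit _ _); simpl; lia. }
  rewrite realizer_bit; apply endpoint_order_reverse; auto using left_lt_right.
  - apply Bool.eqb_reflx.
  - apply Bool.eqb_false_iff; congruence.
Qed.

Lemma reverse_cell_lt x y : step x = step y -> (cell y < cell x)%Z -> realizer 0 y x.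
Proof.
  intros hs hc; apply point_order_lt; unfold cell_end; rewrite hs.
  assert (IZR (cell y) + 1 <= IZR (cell x)) by (rewrite <- plus_IZR; apply IZR_le; lia).
  pose proof (step_ge1 y); nra.
Qed.

Lemma reverse_cell_gt x y :
  step x = step y -> (cell x < cell y)%Z -> l y <= r x ->
  realizer (S (mod3 (cell x))) y x.
Proof.
  intros hs hc hyx.
  assert (near : (cell y < cell x + 3)%Z).
  { apply Z.nle_gt; intros far.
    assert (IZR (cell x) + 3 <= IZR (cell y)) by (rewrite <- plus_IZR; apply IZR_le; lia).
    pose proof (cell_bounds x); pose proof (cell_bounds y); pose proof (step_length x).
    pose proof (step_ge1 x); unfold cell_end in *; rewrite <- hs in *; nra. }
  rewrite realizer_residue by apply mod3_lt.
  apply endpoint_order_reverse; auto using left_lt_right.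
  - apply Nat.eqb_refl.
  - apply Nat.eqb_neq; intros e; apply (mod3_neq (cell x) (cell y)); [lia|congruence].
Qed.

Lemma reverse_same_cell x y :
  x <> y -> step x = step y -> cell x = cell y ->
  exists i, (i < 4)%nat /\ realizer i y x.
Proof.
  intros nxy hs hc.
  assert (hend : cell_end y = cell_end x) by (unfold cell_end; now rewrite hs, hc).
  pose (s := mod3 (cell x)); pose (s' := mod3 (cell x + 1)).
  assert (at_right : forall z, cell z = cell x -> residue_point s z = r z).
  { intros z hz; unfold residue_point, endpoint, s; now rewrite hz, Nat.eqb_refl. }
  assert (at_left : forall z, cell z = cell x -> residue_point s' z = l z).
  { intros z hz; unfold residue_point, endpoint, s'; rewrite hz.
    replace (mod3 (cell x) =? mod3 (cell x + 1))%nat with false; [reflexivity|].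
    symmetry; apply Nat.eqb_neq, mod3_neq; lia. }
  destruct (Rlt_or_le (l y) (l x)) as [hl|hl].
  { exists (S s'); split; [pose proof (mod3_lt (cell x + 1)); unfold s'; lia|].
    rewrite realizer_residue by apply mod3_lt; apply point_order_lt.
    now rewrite !at_left. }
  destruct (Rlt_or_le (r y) (r x)) as [hr|hr].
  { exists (S s); split; [pose proof (mod3_lt (cell x)); unfold s; lia|].
    rewrite realizer_residue by apply mod3_lt; apply point_order_lt.
    now rewrite !at_right. }
  destruct W_total as (_ & _ & Wtot).
  destruct (Rle_lt_or_eq_dec _ _ hl) as [hl'|el].
  { exists 0%nat; split; [lia|]; apply point_order_tie; auto. }
  destruct (Rle_lt_or_eq_dec _ _ hr) as [hr'|er].
  { exists 0%nat; split; [lia|]; apply point_order_tie; auto. }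
  destruct (Wtot x y nxy) as [w|w].
  - exists 0%nat; split; [lia|]; apply point_order_tie; auto.
  - exists (S s); split; [pose proof (mod3_lt (cell x)); unfold s; lia|].
    rewrite realizer_residue by apply mod3_lt.
    apply point_order_tie; [rewrite !at_right by auto; lra|auto].
Qed.

Lemma realizer_reverses x y :
  x <> y -> ~ P x y -> exists i, (i < 2 * K + 4)%nat /\ realizer i y x.
Proof.
  intros nxy nPxy; pose proof (not_prec_overlap x y nPxy) as hyx.
  destruct (Nat.eq_dec (scale x) (scale y)) as [es|ns]; [|now apply reverse_scale_neq].
  assert (hs : step x = step y) by (unfold step; now rewrite es).
  destruct (Z.lt_trichotomy (cell y) (cell x)) as [hc|[hc|hc]].
  - exists 0%nat; split; [lia|]; now apply reverse_cell_lt.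
  - destruct (reverse_same_cell x y nxy hs (eq_sym hc)) as (i & hi & h).
    exists i; split; [lia|exact h].
  - exists (S (mod3 (cell x))); split; [pose proof (mod3_lt (cell x)); lia|].
    now apply reverse_cell_gt.
Qed.

Lemma realizer_dim_le : dim_le P (2 * K + 4).
Proof.
  apply (dim_le_of_reversing_extensions P _ realizer); [lia| |exact realizer_reverses].
  intros i _; apply realizer_linear_extension.
Qed.

End DyadicRealizer.

Lemma dim_le_of_lengths_le_pow2_pow2 (X : Type) (P : X -> X -> Prop) (l r : X -> R) K :
  interval_rep_in P 1 (2 ^ (2 ^ K)%nat) l r -> dim_le P (2 * K + 4).
Proof.
  intros rep; destruct (strict_total_order_exists X) as [W hW].
  exact (realizer_dim_le X P l r K W rep hW).
Qed.

Theorem theorem7p3 (t : R) (ht : 2 <= t) (X : Type) (P : X -> X -> Prop)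
  (l r : X -> R) (hrep : interval_rep_in P 1 t l r) :
  exists k : nat, (Z.of_nat k <= 2 * ceilR (lg (lg t)) + 4)%Z /\ dim_le P k.
Proof.
  destruct (lg_lg_ceil_bound t ht) as (K & hK & htK).
  exists (2 * K + 4)%nat; split; [lia|].
  apply (dim_le_of_lengths_le_pow2_pow2 X P l r).
  exact (interval_rep_in_widen P 1 t _ l r htK hrep).
Qed.
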